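(* Let $F:[0,1]^{N}\times[0,1]\to\mathbb{R}$ be a non-constant analytic function. For every $\epsilon\in(0,1]$ such that $\Sigma_{\epsilon}\neq\emptyset$, there exists $\delta\in(0,1]$ such that $(\epsilon,\delta)\in A$.
   Context: ''Analytic'' means real analytic on a neighbourhood of $[0,1]^{N}\times[0,1]$. $\mathcal{F}_{\mathbf{x},\delta}=\{t\in[0,1]:|F(\mathbf{x},t)|\geq\delta\}$. $\Sigma=\{\mathbf{x}\in[0,1]^{N}:F(\mathbf{x},t)=0\ \forall t\in[0,1]\}$, $\Sigma_{\epsilon}=\{\mathbf{x}\in[0,1]^{N}:\operatorname{dist}(\mathbf{x},\Sigma)\geq\epsilon\}$ (with $\Sigma_\epsilon=[0,1]^N$ if $\Sigma=\emptyset$). $A=\{(\epsilon,\delta)\in(0,1]^{2}:\ \forall\mathbf{x}\in\Sigma_{\epsilon},\ \forall\xi\in[0,1],\ (\xi-\tfrac{\epsilon}{2},\xi+\tfrac{\epsilon}{2})\cap\mathcal{F}_{\mathbf{x},\delta}\neq\emptyset\}$. *)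

From HB Require Import structures.
From mathcomp Require Import all_boot all_order all_algebra.
From mathcomp Require Import all_classical all_reals all_analysis.
Set Implicit Arguments. Unset Strict Implicit. Unset Printing Implicit Defensive.
Import Order.TTheory GRing.Theory Num.Theory.
Import numFieldNormedType.Exports.
Local Open Scope classical_set_scope.
Local Open Scope ring_scope.

Definition monom {R : realType} {n : nat} (a : 'I_n -> nat) (y : 'I_n -> R) : R :=
  \prod_(i < n) y i ^+ a i.

Definition psum {R : realType} {n : nat} (c : ('I_n -> nat) -> R) (y : 'I_n -> R)
  (k : nat) : R :=
  \sum_(a : {ffun 'I_n -> 'I_k.+1} | (\sum_(i < n) (a i : nat) <= k)%N)
     c (fun i => a i : nat) * monom (fun i => a i : nat) y.

Definition abs_psum {R : realType} {n : nat} (c : ('I_n -> nat) -> R) (y : 'I_n -> R)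
  (k : nat) : R :=
  \sum_(a : {ffun 'I_n -> 'I_k.+1} | (\sum_(i < n) (a i : nat) <= k)%N)
     `|c (fun i => a i : nat) * monom (fun i => a i : nat) y|.

Definition analytic_at {R : realType} {n : nat} (f : ('I_n -> R) -> R) (p : 'I_n -> R) :=
  exists r : R, 0 < r /\ exists c : ('I_n -> nat) -> R,
    forall y : 'I_n -> R, (forall i, `|y i - p i| < r) ->
      (exists M : R, forall k, abs_psum c (fun i => y i - p i) k <= M) /\
      ((fun k => psum c (fun i => y i - p i) k) @ \oo --> f y).

Definition uncurryF {R : realType} {N : nat} (F : ('I_N -> R) -> R -> R)
  (p : 'I_N.+1 -> R) : R :=
  F (fun i : 'I_N => p (widen_ord (leqnSn N) i)) (p ord_max).

Definition analytic_nbhd {R : realType} {N : nat} (F : ('I_N -> R) -> R -> R) :=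
  exists eta : R, 0 < eta /\
    forall p : 'I_N.+1 -> R, (forall i, - eta < p i < 1 + eta) ->
      analytic_at (uncurryF F) p.

Definition cube {R : realType} {n : nat} (x : 'I_n -> R) : Prop :=
  forall i, 0 <= x i <= 1.

Definition nonconstant {R : realType} {N : nat} (F : ('I_N -> R) -> R -> R) :=
  exists (x y : 'I_N -> R) (t s : R),
    [/\ cube x, 0 <= t <= 1, cube y, 0 <= s <= 1 & F x t <> F y s].

Definition eucl {R : realType} {n : nat} (x y : 'I_n -> R) : R :=
  Num.sqrt (\sum_(i < n) (x i - y i) ^+ 2).

Definition dist_set {R : realType} {n : nat} (x : 'I_n -> R) (S : set ('I_n -> R)) : R :=
  inf [set eucl x y | y in S].

Definition Sigma {R : realType} {N : nat} (F : ('I_N -> R) -> R -> R) : set ('I_N -> R) :=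
  [set x | cube x /\ forall t : R, 0 <= t <= 1 -> F x t = 0].

(* Sigma_eps, with the convention Sigma_eps = [0,1]^N when Sigma is empty *)
Definition Sigma_eps {R : realType} {N : nat} (F : ('I_N -> R) -> R -> R) (eps : R)
  : set ('I_N -> R) :=
  [set x | cube x /\ (Sigma F = set0 \/ eps <= dist_set x (Sigma F))].

Definition Fset {R : realType} {N : nat} (F : ('I_N -> R) -> R -> R) (x : 'I_N -> R)
  (delta : R) : set R :=
  [set t | 0 <= t <= 1 /\ delta <= `|F x t|].

Definition inA {R : realType} {N : nat} (F : ('I_N -> R) -> R -> R) (eps delta : R) : Prop :=
  [/\ 0 < eps <= 1, 0 < delta <= 1 &
    forall x, Sigma_eps F eps x -> forall xi : R, 0 <= xi <= 1 ->
      exists t : R, xi - eps / 2 < t < xi + eps / 2 /\ Fset F x delta t].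

(* If no delta works, then for every k there are x_k in Sigma_eps and xi_k in
   [0,1] with |F(x_k, t)| < 1/(k+1) for all t in [0,1] within eps/2 of xi_k.
   By compactness the points (x_k, xi_k) cluster at some (x, xi).  Continuity
   of F in x makes F(x, .) vanish on [0,1] near xi, and F(x, .) is analytic in
   t, so it vanishes on all of [0,1]: along the t-axis the expansion of F is a
   one-variable power series whose coefficients all vanish when its zeros
   cluster at the centre, and a supremum argument spreads the zeros over
   [0,1].  Hence x is in Sigma, although it is a limit of points at distance
   at least eps from Sigma. *)

From HB Require Import structures.
From mathcomp Require Import all_boot all_order all_algebra.
From mathcomp Require Import all_classical all_reals all_analysis.
From mathcomp Require Import ring lra.
Import Order.TTheory GRing.Theory Num.Theory.
Import numFieldNormedType.Exports.
Set Implicit Arguments. Unset Strict Implicit.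
Local Open Scope classical_set_scope.
Local Open Scope ring_scope.

Section IdentityPrinciple.
Variable R : realType.
Implicit Types (g : R -> R) (a b c lo hi u : R).

Definition zeros_cluster_at g u :=
  forall eta, 0 < eta -> exists v, 0 < `|v - u| < eta /\ g v = 0.

Definition identity_principle g lo hi :=
  forall u, lo <= u <= hi -> zeros_cluster_at g u ->
    exists2 r, 0 < r & forall v, `|v - u| < r -> g v = 0.

Lemma zeros_cluster_at_right_end g a u : a < u ->
  (forall v, a < v < u -> g v = 0) -> zeros_cluster_at g u.
Proof.
move=> au g0 eta eta0; set m := Num.min eta (u - a).
have m_eta : m <= eta by rewrite ge_min lexx.
have m_ua : m <= u - a by rewrite ge_min lexx orbT.
have m0 : 0 < m by rewrite lt_min eta0 /=; lra.
exists (u - m / 2); split; last by apply: g0; apply/andP; split; lra.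
rewrite addrAC subrr add0r normrN ger0_norm; lra.
Qed.

Lemma identity_principle_zero_right g lo hi a c : identity_principle g lo hi ->
  lo <= a -> a < c -> c <= hi -> (forall v, a < v <= c -> g v = 0) ->
  forall v, c <= v <= hi -> g v = 0.
Proof.
move=> ipg loa ac chi g0.
pose S := [set u | c <= u <= hi /\ forall v, c <= v <= u -> g v = 0].
have Sc : S c.
  split=> [|v /andP[cv vc]]; first by rewrite lexx.
  by apply: g0; rewrite (lt_le_trans ac cv).
have supS : has_sup S by split; [exists c | exists hi => u [/andP[_ ->]]].
set s := sup S.
have cs : c <= s by exact: sup_upper_bound.
have shi : s <= hi by apply: ge_sup => [|u [/andP[_ ->]]]; first by exists c.
have g0_below v : c <= v < s -> g v = 0.
  move=> /andP[cv vs]; have sv0 : 0 < s - v by rewrite subr_gt0.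
  have [u [_ Su] su] := sup_adherent sv0 supS.
  by apply: Su; rewrite cv /=; move: su; rewrite /s; lra.
have [r r0 g0_near] : exists2 r, 0 < r & forall v, `|v - s| < r -> g v = 0.
  apply: ipg; first by apply/andP; split; lra.
  apply: (zeros_cluster_at_right_end (a := a)); first lra.
  move=> v /andP[av vs]; have [vc|cv] := leP v c; first by apply: g0; rewrite av.
  by apply: g0_below; rewrite vs ltW.
have g0_upto v : c <= v -> v < s + r -> g v = 0.
  move=> cv vsr; have [vs|sv] := ltP v s; first by apply: g0_below; rewrite cv.
  by apply: g0_near; rewrite ger0_norm; lra.
have s_hi : s = hi.
  apply/eqP; rewrite eq_le shi leNgt; apply/negP => shi'.
  set u := Num.min hi (s + r / 2).
  have uhi : u <= hi by rewrite ge_min lexx.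
  have usr : u <= s + r / 2 by rewrite ge_min lexx orbT.
  have su : s < u by rewrite lt_min shi' /=; lra.
  have : S u by split=> [|v /andP[cv vu]]; [apply/andP; split; lra | apply: g0_upto; lra].
  by move/(sup_upper_bound supS); rewrite -/s; lra.
by move=> v /andP[cv vhi]; apply: g0_upto; lra.
Qed.

Lemma identity_principle_opp g lo hi : identity_principle g lo hi ->
  identity_principle (fun v => g (- v)) (- hi) (- lo).
Proof.
move=> ipg u hu acc.
have hu' : lo <= - u <= hi by rewrite lerNr lerNl andbC.
have acc' : zeros_cluster_at g (- u).
  move=> eta eta0; have [v [vu gv]] := acc eta eta0.
  by exists (- v); rewrite -opprD normrN.
have [r r0 g0] := ipg _ hu' acc'.
by exists r => // v vu; apply: g0; rewrite -opprD normrN.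
Qed.

Lemma identity_principle_zero g lo hi a b : identity_principle g lo hi ->
  lo <= a -> a < b -> b <= hi -> (forall v, a < v < b -> g v = 0) ->
  forall v, lo <= v <= hi -> g v = 0.
Proof.
move=> ipg loa ab bhi g0 v /andP[lov vhi]; set c := (a + b) / 2.
have ac : a < c by rewrite /c; lra.
have cb : c < b by rewrite /c; lra.
have [cv|vc] := leP c v.
  apply: (identity_principle_zero_right ipg (a := a) (c := c)); try lra.
  by move=> w /andP[aw wc]; apply: g0; apply/andP; split; lra.
rewrite -[v]opprK.
apply: (identity_principle_zero_right (identity_principle_opp ipg) (a := - b) (c := - c)); try lra.
by move=> w /andP[bw wc]; apply: g0; apply/andP; split; lra.
Qed.

End IdentityPrinciple.

Section OneVariablePowerSeries.
Variable R : realType.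
Implicit Types (d : nat -> R) (g : R -> R).

Lemma cvg_dist_le (u : nat -> R) (L C B : R) (m : nat) :
  u @ \oo --> L -> (forall k, (m <= k)%N -> `|u k - C| <= B) -> `|L - C| <= B.
Proof.
move=> uL uB; have : (fun k => `|u k - C|) @ \oo --> `|L - C|.
  by apply: cvg_norm; apply: cvgB => //; exact: cvg_cst.
by apply: (closed_cvg (fun x : R => x <= B) (@closed_le R B)); exists m.
Qed.

Definition pseries_on d g (r : R) :=
  forall s, `|s| < r ->
    (exists M, forall k, \sum_(j < k.+1) `|d j| * `|s| ^+ j <= M) /\
    (fun k => \sum_(j < k.+1) d j * s ^+ j) @ \oo --> g s.

Lemma pseries_sub_lead_le d g r w M m s : pseries_on d g r -> 0 < w < r ->
  (forall k, \sum_(j < k.+1) `|d j| * w ^+ j <= M) -> (forall j, (j < m)%N -> d j = 0) ->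
  `|s| <= w -> `|g s - d m * s ^+ m| <= (`|s| / w) ^+ m.+1 * M.
Proof.
move=> dg /andP[w0 wr] dM d0 sw; have [_ gs] := dg s (le_lt_trans sw wr).
set q := `|s| / w.
have q0 : 0 <= q by rewrite divr_ge0 // ltW.
have q1 : q <= 1 by rewrite ler_pdivrMr // mul1r.
have term j : j != m -> `|d j * s ^+ j| <= q ^+ m.+1 * (`|d j| * w ^+ j).
  move=> jm; have [jm'|mj] := ltnP j m; first by rewrite d0 // !(mul0r, normr0) mulr0.
  have mj' : (m < j)%N by rewrite ltn_neqAle eq_sym jm mj.
  rewrite normrM normrX mulrCA ler_wpM2l // -[`|s|](divfK (lt0r_neq0 w0)) -/q exprMn.
  by apply: ler_wpM2r; [rewrite exprn_ge0 ?ltW | rewrite ler_wiXn2l].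
apply: (cvg_dist_le (m := m) gs) => k mk.
rewrite (bigD1 (inord m)) //= inordK ?ltnS // addrAC subrr add0r.
apply: le_trans (ler_norm_sum _ _ _) _.
apply: (@le_trans _ _ (\sum_(j < k.+1 | j != inord m) q ^+ m.+1 * (`|d j| * w ^+ j))).
  apply: ler_sum => j jm; apply: term; apply: contraNneq jm => jm.
  by apply/eqP/val_inj; rewrite /= inordK ?jm ?ltnS.
rewrite -mulr_sumr ler_wpM2l ?exprn_ge0 //; apply: le_trans (dM k).
by rewrite [leRHS](bigD1 (inord m)) //= lerDr mulr_ge0 // exprn_ge0 // ltW.
Qed.

(* If d_m is the first non-zero coefficient, [pseries_sub_lead_le] gives
   |d_m| <= |s| M / w^(m+1) at every zero s of g, which fails for small s. *)
Lemma pseries_coef_eq0 d g r : pseries_on d g r -> 0 < r ->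
  zeros_cluster_at g 0 -> forall j, d j = 0.
Proof.
move=> dg r0 acc; set w := r / 2.
have w0 : 0 < w by rewrite divr_gt0.
have wr : 0 < w < r by rewrite w0 /w ltr_pdivrMr // ltr_pMr ?ltr1n.
have wn : `|w| < r by rewrite gtr0_norm //; case/andP: wr.
have [[M dM] _] := dg w wn.
rewrite gtr0_norm // in dM.
have M0 : 0 <= M.
  by apply: le_trans (dM 0%N); apply: sumr_ge0 => j _; rewrite mulr_ge0 // exprn_ge0 // ltW.
elim/ltn_ind => m IH; apply/eqP; apply: contraT => dm0.
set K := M / w ^+ m.+1.
have K0 : 0 <= K by rewrite divr_ge0 // exprn_ge0 // ltW.
have ad : 0 < `|d m| by rewrite normr_gt0.
have eta0 : 0 < Num.min w (`|d m| / (K + 1)) by rewrite lt_min w0 divr_gt0 // ltr_wpDl.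
have [s [/andP[s0 seta] gs]] := acc _ eta0; rewrite subr0 in s0 seta.
have sw : `|s| <= w by apply: ltW; apply: lt_le_trans seta _; rewrite ge_min lexx.
have sd : `|s| * (K + 1) < `|d m|.
  by rewrite -ltr_pdivlMr ?ltr_wpDl //; apply: lt_le_trans seta _; rewrite ge_min lexx orbT.
have := pseries_sub_lead_le dg wr dM IH sw; rewrite gs sub0r normrN normrM normrX.
have -> : (`|s| / w) ^+ m.+1 * M = `|s| ^+ m * (`|s| * K).
  by rewrite /K expr_div_n exprS; field; rewrite expf_neq0 // gt_eqF.
rewrite mulrC ler_pM2l ?exprn_gt0 // => dsK.
by have := lt_le_trans sd dsK; rewrite mulrDr mulr1 ltNge lerDl normr_ge0.
Qed.

Lemma pseries_eq0 d g r : pseries_on d g r -> 0 < r ->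
  zeros_cluster_at g 0 -> forall s, `|s| < r -> g s = 0.
Proof.
move=> dg r0 acc s sr; have [_ gs] := dg s sr.
have : `|g s - 0| <= 0.
  apply: (cvg_dist_le (m := 0) gs) => k _.
  by rewrite big1 ?subrr ?normr0 // => j _; rewrite (pseries_coef_eq0 dg) ?mul0r.
by rewrite subr0 normr_le0 => /eqP.
Qed.

End OneVariablePowerSeries.

Section PowerSeriesExpansion.
Variables (R : realType) (n : nat).
Implicit Types (c : ('I_n -> nat) -> R) (f : ('I_n -> R) -> R) (p y v : 'I_n -> R).

(* [analytic_at f p] unfolds to [exists r, 0 < r /\ exists c, expansion_on c f p r]. *)
Definition expansion_on c f p (r : R) :=
  forall y, (forall i, `|y i - p i| < r) ->
    (exists M, forall k, abs_psum c (fun i => y i - p i) k <= M) /\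
    (fun k => psum c (fun i => y i - p i) k) @ \oo --> f y.

Definition axis_vec (m0 : 'I_n) (s : R) : 'I_n -> R :=
  fun i => if i == m0 then s else 0.

Definition axis_index (m0 : 'I_n) (j : nat) : 'I_n -> nat :=
  fun i => if i == m0 then j else 0%N.

Lemma monom_axis m0 j s : monom (axis_index m0 j) (axis_vec m0 s) = s ^+ j.
Proof.
rewrite /monom (bigD1 m0) //= /axis_index /axis_vec eqxx big1 ?mulr1 // => i.
by move=> /negbTE ->; rewrite expr0.
Qed.

Lemma monom_axis_eq0 (a : 'I_n -> nat) m0 i s :
  i != m0 -> a i != 0%N -> monom a (axis_vec m0 s) = 0.
Proof.
move=> im ai; rewrite /monom (bigD1 i) //= /axis_vec (negbTE im) expr0n.
by rewrite (negbTE ai) mul0r.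
Qed.

Lemma sum_mindex_axis (G : R -> R) c m0 s k : G 0 = 0 ->
  \sum_(a : {ffun 'I_n -> 'I_k.+1} | (\sum_(i < n) (a i : nat) <= k)%N)
     G (c (fun i => a i : nat) * monom (fun i => a i : nat) (axis_vec m0 s)) =
  \sum_(j < k.+1) G (c (axis_index m0 j) * s ^+ j).
Proof.
move=> G0; rewrite (bigID (fun a : {ffun _} => [forall i, (i != m0) ==> (a i == ord0)])) /=.
rewrite [X in _ + X]big1 ?addr0; last first.
  move=> a /andP[_ /forallPn[i]]; rewrite negb_imply => /andP[im ai].
  by rewrite (@monom_axis_eq0 _ _ i) // mulr0.
pose h (j : 'I_k.+1) : {ffun 'I_n -> 'I_k.+1} := [ffun i => if i == m0 then j else ord0].
have hE j : (fun i => h j i : nat) = axis_index m0 j.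
  by apply/funext => i; rewrite /h ffunE /axis_index; case: eqP.
rewrite (reindex_onto h (fun a => a m0)) /=; last first.
  move=> a /andP[_ /forallP pa]; apply/ffunP => i; rewrite ffunE.
  by case: eqVneq => [->//|im]; apply/esym/eqP; have := pa i; rewrite im.
apply: eq_big => [j|j _]; last by rewrite hE monom_axis.
rewrite ffunE eqxx eqxx andbT; apply/andP; split.
  rewrite (bigD1 m0) //= ffunE eqxx big1 ?addn0 -1?ltnS // => i /negbTE im.
  by rewrite ffunE im.
by apply/forallP => i; rewrite ffunE; case: eqP.
Qed.

Lemma expansion_on_axis c f p r m0 : expansion_on c f p r ->
  pseries_on (fun j => c (axis_index m0 j))
             (fun s => f (fun i => p i + axis_vec m0 s i)) r.
Proof.
move=> cf s sr.
have yp : (fun i => p i + axis_vec m0 s i - p i) = axis_vec m0 s.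
  by apply/funext => i; rewrite addrAC subrr add0r.
have [|[M cM] cvg_f] := cf (fun i => p i + axis_vec m0 s i).
  move=> i; rewrite addrAC subrr add0r /axis_vec.
  by case: eqP => _ //; rewrite normr0 (le_lt_trans (normr_ge0 s)).
rewrite yp in cM cvg_f; split.
  exists M => k; have := cM k; rewrite /abs_psum (sum_mindex_axis (G := Num.norm)) ?normr0 //.
  by under eq_bigr do rewrite normrM normrX.
suff -> : (fun k => \sum_(j < k.+1) c (axis_index m0 j) * s ^+ j) =
          (fun k => psum c (axis_vec m0 s) k) by [].
by apply/funext => k; symmetry; exact: (sum_mindex_axis (G := id)).
Qed.

Lemma monom_ge0 (a : 'I_n -> nat) (w : R) : 0 <= w -> 0 <= monom a (fun=> w).
Proof. by move=> w0; apply: prodr_ge0 => i _; apply: exprn_ge0. Qed.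

Lemma monom_le_scale (a : 'I_n -> nat) v (rho w : R) :
  0 <= rho <= w -> 0 < w -> (forall i, `|v i| <= rho) -> (exists j, a j != 0%N) ->
  `|monom a v| <= rho / w * monom a (fun=> w).
Proof.
move=> /andP[rho0 rhow] w0 vrho [j aj].
have q0 : 0 <= rho / w by rewrite divr_ge0 // ltW.
have q1 : rho / w <= 1 by rewrite ler_pdivrMr // mul1r.
rewrite /monom normr_prod.
apply: (@le_trans _ _ (\prod_(i < n) ((rho / w) ^+ a i * w ^+ a i))).
  apply: ler_prod => i _; rewrite normr_ge0 normrX -exprMn divfK ?lt0r_neq0 //.
  by rewrite lerXn2r ?nnegrE.
rewrite big_split /=; apply: ler_wpM2r; first exact: monom_ge0 (ltW w0).
rewrite (bigD1 j) //=.
apply: (@le_trans _ _ ((rho / w) ^+ a j)).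
  by rewrite ler_piMr ?exprn_ge0 // prodr_ile1 // => i _; rewrite exprn_ge0 // exprn_ile1.
by rewrite -[leRHS]expr1 ler_wiXn2l // lt0n.
Qed.

Lemma expansion_on_abs_psum_bounded c f p r : 0 < r -> expansion_on c f p r ->
  exists2 M, 0 <= M & forall k, abs_psum c (fun=> r / 2) k <= M.
Proof.
move=> r0 cf; have [|[M cM] _] := cf (fun i => p i + r / 2).
  by move=> i; rewrite addrAC subrr add0r gtr0_norm ?ltr_pdivrMr ?ltr_pMr ?ltr1n ?divr_gt0.
have E : (fun i => p i + r / 2 - p i) = fun=> r / 2.
  by apply/funext => i; rewrite addrAC subrr add0r.
rewrite E in cM; exists M => //; apply: le_trans (cM 0%N).
by apply: sumr_ge0 => a _; exact: normr_ge0.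
Qed.

Lemma expansion_on_sub_const_le c f p r : 0 < r -> expansion_on c f p r ->
  exists2 M, 0 <= M & forall rho y, 0 <= rho <= r / 2 -> (forall i, `|y i - p i| <= rho) ->
    `|f y - c (fun=> 0%N)| <= rho / (r / 2) * M.
Proof.
move=> r0 cf; have [M M0 cM] := expansion_on_abs_psum_bounded r0 cf.
exists M => // rho y /andP[rho0 rhow] yp; set w := r / 2.
have w0 : 0 < w by rewrite divr_gt0.
have wr : w < r by rewrite /w ltr_pdivrMr ?ltr_pMr ?ltr1n.
have [_ cvg_f] := cf y (fun i => le_lt_trans (yp i) (le_lt_trans rhow wr)).
apply: (cvg_dist_le (m := 0) cvg_f) => k _.
pose a0 : {ffun 'I_n -> 'I_k.+1} := [ffun => ord0].
have a0E : (fun i => a0 i : nat) = fun=> 0%N by apply/funext => i; rewrite ffunE.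
rewrite /psum (bigD1 a0) /=; last by rewrite big1 // => i _; rewrite ffunE.
rewrite a0E /monom big1 ?mulr1 // addrAC subrr add0r.
apply: le_trans (ler_norm_sum _ _ _) _.
apply: (@le_trans _ _ (rho / w * \sum_(a : {ffun 'I_n -> 'I_k.+1} |
    (\sum_(i < n) (a i : nat) <= k)%N && (a != a0))
    `|c (fun i => a i : nat) * monom (fun i => a i : nat) (fun=> w)|)).
  rewrite mulr_sumr; apply: ler_sum => a /andP[_ aa0].
  have [j aj] : exists j, (a j : nat) != 0%N.
    apply/existsP; apply: contraR aa0; rewrite negb_exists => /forallP a0j.
    by apply/eqP/ffunP => i; apply/val_inj; rewrite ffunE /=; apply/eqP; rewrite -[_ == _]negbK.
  rewrite !normrM mulrCA ler_wpM2l // (ger0_norm (monom_ge0 _ (ltW w0))).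
  by apply: monom_le_scale => //; [rewrite rho0 | exists j].
apply: ler_wpM2l; first by rewrite divr_ge0 // ltW.
apply: le_trans (cM k).
by rewrite /abs_psum [leRHS](bigD1 a0) //= ?lerDr // big1 // => i _; rewrite ffunE.
Qed.

Lemma expansion_on_continuous_at c f p r : 0 < r -> expansion_on c f p r ->
  forall e, 0 < e -> exists2 rho, 0 < rho &
    forall y, (forall i, `|y i - p i| < rho) -> `|f y - f p| < e.
Proof.
move=> r0 cf e e0; have [M M0 fM] := expansion_on_sub_const_le r0 cf.
set w := r / 2; have w0 : 0 < w by rewrite divr_gt0.
have fp : f p = c (fun=> 0%N).
  have w00 : (0 : R) <= 0 <= w by rewrite lexx ltW.
  have p0 i : `|p i - p i| <= 0 by rewrite subrr normr0.
  by have := fM 0 p w00 p0; rewrite !mul0r normr_le0 subr_eq0 => /eqP.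
pose rho := Num.min w (e / (M + 1) * w).
have rho0 : 0 < rho by rewrite lt_min w0 mulr_gt0 ?divr_gt0 // ltr_wpDl.
exists rho => // y yp; rewrite fp.
have rhow : 0 <= rho <= w by rewrite ltW //= ge_min lexx.
apply: le_lt_trans (fM rho y rhow (fun i => ltW (yp i))) _.
have rw : rho / w <= e / (M + 1) by rewrite ler_pdivrMr // ge_min lexx orbT.
apply: le_lt_trans (ler_wpM2r M0 rw) _.
by rewrite mulrAC ltr_pdivrMr ?ltr_wpDl // ltr_pM2l //; lra.
Qed.

End PowerSeriesExpansion.

Section UnitCube.
Variables (R : realType) (n : nat).

Definition cluster_pt (u : nat -> 'I_n -> R) (q : 'I_n -> R) :=
  forall d, 0 < d -> forall m, exists2 k, (m <= k)%N & forall i, `|u k i - q i| < d.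

Lemma cube_seq_cluster (u : nat -> 'I_n -> R) :
  (forall k, cube (u k)) -> exists2 q, cube q & cluster_pt u q.
Proof.
move=> cu; have [|q [cq q_clu]] := @tychonoff _ (fun=> R) (fun=> `[(0 : R), 1]%classic)
    (fun=> @segment_compact R 0 1) (u @ \oo) _.
  by exists 0%N => // k _ i /=; rewrite in_itv /= cu.
exists q => [i|d d0 m]; first by have := cq i; rewrite /= in_itv.
have box : nbhs q [set y : 'I_n -> R | forall i, `|y i - q i| < d].
  have qF : Filter (nbhs q) by exact: nbhs_filter.
  apply: (@filter_forall _ _ (fun i (y : 'I_n -> R) => `|y i - q i| < d) _ qF) => i.
  apply: (@filterS _ _ qF _ _ _ (@proj_continuous _ (fun=> R) i q _ (nbhsx_ballx _ _ d0))).
  by move=> y /=; rewrite /ball /= distrC.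
have tail : (u @ \oo) [set u k | k in [set k | (m <= k)%N]] by exists m => // k /= mk; exists k.
by have [_ [[k mk <-] uk]] := q_clu _ _ tail box; exists k.
Qed.

Lemma eucl_lt_box (x y : 'I_n -> R) d : 0 < d ->
  (forall i, `|x i - y i| < d) -> eucl x y < n.+1%:R * d.
Proof.
move=> d0 xy; rewrite /eucl -[_ * d]ger0_norm ?mulr_ge0 ?ltW // -sqrtr_sqr.
rewrite ltr_sqrt ?exprn_gt0 ?mulr_gt0 //.
apply: (@le_lt_trans _ _ (\sum_(i < n) d ^+ 2)).
  apply: ler_sum => i _; rewrite -real_normK ?num_real // ler_sqr ?nnegrE ?(ltW d0) //.
  exact: ltW (xy i).
rewrite sumr_const card_ord -[_ *+ n]mulr_natl exprMn ltr_pM2r ?exprn_gt0 //.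
by rewrite -natrX ltr_nat expnS expn1 (leq_trans (ltnSn n) (leq_pmulr _ _)).
Qed.

End UnitCube.

Section Slices.
Variables (R : realType) (N : nat) (F : ('I_N -> R) -> R -> R).
Implicit Types (x : 'I_N -> R) (q : 'I_N.+1 -> R).

Definition x_of q : 'I_N -> R := fun j => q (lift ord_max j).

Definition xt_pt x (t : R) : 'I_N.+1 -> R :=
  fun i => if unlift ord_max i is Some j then x j else t.

Lemma xt_pt_max x t : xt_pt x t ord_max = t.
Proof. by rewrite /xt_pt unlift_none. Qed.

Lemma x_of_xt_pt x t : x_of (xt_pt x t) = x.
Proof. by apply/funext => j; rewrite /x_of /xt_pt liftK. Qed.

Lemma uncurryF_xt_pt x t : uncurryF F (xt_pt x t) = F x t.
Proof.
rewrite /uncurryF xt_pt_max; congr F; apply/funext => j.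
have -> : widen_ord (leqnSn N) j = lift ord_max j.
  by apply/val_inj; rewrite /= /bump leqNgt ltn_ord.
by rewrite /xt_pt liftK.
Qed.

Lemma xt_pt_axis x t s :
  (fun i => xt_pt x t i + axis_vec ord_max s i) = xt_pt x (t + s).
Proof.
apply/funext => i; rewrite /axis_vec; case: (unliftP ord_max i) => [j ->|->].
  by rewrite eq_sym (negbTE (neq_lift _ _)) addr0 /xt_pt liftK.
by rewrite eqxx !xt_pt_max.
Qed.

Lemma cube_x_of q : cube q -> cube (x_of q).
Proof. by move=> cq j; exact: cq. Qed.

Lemma cube_of_x_of q : cube (x_of q) -> 0 <= q ord_max <= 1 -> cube q.
Proof. by move=> cx q01 i; case: (unliftP ord_max i) => [j ->|->] //; exact: cx. Qed.

Lemma cube_xt_pt x t : cube x -> 0 <= t <= 1 -> cube (xt_pt x t).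
Proof.
by move=> cx t01 i; case: (unliftP ord_max i) => [j ->|->]; rewrite /xt_pt ?liftK ?unlift_none.
Qed.

Hypothesis FA : analytic_nbhd F.

Lemma analytic_nbhd_expansion x t : cube x -> 0 <= t <= 1 ->
  exists r c, 0 < r /\ expansion_on c (uncurryF F) (xt_pt x t) r.
Proof.
move=> cx t01; have [eta [eta0 Fan]] := FA.
have [|r [r0 [c cf]]] := Fan (xt_pt x t).
  by move=> i; have /andP[] := cube_xt_pt cx t01 i; lra.
by exists r, c.
Qed.

Lemma analytic_nbhd_continuous_x x t : cube x -> 0 <= t <= 1 ->
  forall e, 0 < e -> exists2 rho, 0 < rho &
    forall y, (forall j, `|y j - x j| < rho) -> `|F y t - F x t| < e.
Proof.
move=> cx t01 e e0; have [r [c [r0 cf]]] := analytic_nbhd_expansion cx t01.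
have [rho rho0 fc] := expansion_on_continuous_at r0 cf e0.
exists rho => // y yx; rewrite -!uncurryF_xt_pt; apply: fc => i.
case: (unliftP ord_max i) => [j ->|->]; last by rewrite !xt_pt_max subrr normr0.
by rewrite /xt_pt liftK.
Qed.

Lemma analytic_nbhd_identity_principle x : cube x -> identity_principle (F x) 0 1.
Proof.
move=> cx u u01 acc; have [r [c [r0 cf]]] := analytic_nbhd_expansion cx u01.
have gE : (fun s => uncurryF F (fun i => xt_pt x u i + axis_vec ord_max s i)) =
          (fun s => F x (u + s)).
  by apply/funext => s; rewrite xt_pt_axis uncurryF_xt_pt.
have := expansion_on_axis ord_max cf; rewrite gE => /pseries_eq0 Fu0; exists r => // v vu.
rewrite -(subrKC u v); apply: Fu0 => // eta /acc[w [wu Fw]].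
by exists (w - u); rewrite subr0 subrKC.
Qed.

Lemma analytic_nbhd_Sigma x xi rho : cube x -> 0 <= xi <= 1 -> 0 < rho ->
  (forall t, 0 <= t <= 1 -> `|t - xi| < rho -> F x t = 0) -> Sigma F x.
Proof.
move=> cx /andP[xi0 xi1] rho0 F0; split => //.
set a := Num.max 0 (xi - rho); set b := Num.min 1 (xi + rho).
have a0 : 0 <= a by rewrite le_max lexx.
have b1 : b <= 1 by rewrite ge_min lexx.
have ab : a < b by rewrite lt_min !gt_max; apply/and3P; split; lra.
apply: (identity_principle_zero (analytic_nbhd_identity_principle cx) a0 ab b1).
move=> t; rewrite lt_min gt_max => /andP[/andP[t0 t1] /andP[t2 t3]].
by apply: F0; [apply/andP; split; lra | rewrite ltr_distl; apply/andP; split; lra].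
Qed.

End Slices.

Section SmallValues.
Variables (R : realType) (N : nat) (F : ('I_N -> R) -> R -> R) (eps : R).
Implicit Types (x y : 'I_N -> R) (q : 'I_N.+1 -> R) (qs : nat -> 'I_N.+1 -> R).

Lemma Sigma_eps_le_eucl x y : Sigma_eps F eps y -> Sigma F x -> eps <= eucl y x.
Proof.
move=> [_ [S0|eps_dist]] Sx; first by move: Sx; rewrite S0.
apply: le_trans eps_dist (ge_inf _ _); last by exists x.
by exists 0 => _ [z _ <-]; exact: sqrtr_ge0.
Qed.

Lemma Sigma_eps_cluster_notin qs q : 0 < eps ->
  (forall k, Sigma_eps F eps (x_of (qs k))) -> cluster_pt qs q -> ~ Sigma F (x_of q).
Proof.
move=> eps0 qseps qq Sx; have d0 : 0 < eps / N.+1%:R by rewrite divr_gt0.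
have [k _ qk] := qq _ d0 0%N.
have := eucl_lt_box d0 (fun j => qk (lift ord_max j)).
rewrite mulrC divfK ?pnatr_eq0 // => /(le_lt_trans (Sigma_eps_le_eucl (qseps k) Sx)).
by rewrite ltxx.
Qed.

Lemma not_inA_small_values : 0 < eps <= 1 ->
  ~ (exists delta, 0 < delta <= 1 /\ inA F eps delta) ->
  forall k, exists q, [/\ Sigma_eps F eps (x_of q), 0 <= q ord_max <= 1 &
    forall t, 0 <= t <= 1 -> `|t - q ord_max| < eps / 2 -> `|F (x_of q) t| < k.+1%:R^-1].
Proof.
move=> eps01 noA k; apply: contrapT => no_q; apply: noA.
have dk : 0 < (k.+1%:R^-1 : R) <= 1 by rewrite invr_gt0 ltr0n invf_le1 ?ler1n.
exists k.+1%:R^-1; split => //; split => // x Sx xi xi01.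
apply: contrapT => no_t; apply: no_q; exists (xt_pt x xi).
rewrite x_of_xt_pt xt_pt_max; split => // t t01 txi; rewrite ltNge; apply/negP => Fk.
by apply: no_t; exists t; rewrite -ltr_distlC distrC.
Qed.

Lemma small_values_cluster_eq0 qs q : analytic_nbhd F -> cube q -> cluster_pt qs q ->
  (forall k t, 0 <= t <= 1 -> `|t - qs k ord_max| < eps / 2 ->
     `|F (x_of (qs k)) t| < k.+1%:R^-1) ->
  forall t, 0 <= t <= 1 -> `|t - q ord_max| < eps / 2 -> F (x_of q) t = 0.
Proof.
move=> FA cq qq small t t01 tq.
suff Fx_small e : 0 < e -> `|F (x_of q) t| < e.
  apply/eqP; apply: contraT => Fx0.
  by have := Fx_small `|F (x_of q) t|; rewrite normr_gt0 ltxx => /(_ Fx0).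
move=> e0; have e2 : 0 < e / 2 by rewrite divr_gt0.
have [rho rho0 Fc] := analytic_nbhd_continuous_x FA (cube_x_of cq) t01 e2.
have [m _ km] := near_infty_natSinv_lt (PosNum e2).
set d := Num.min rho (eps / 2 - `|t - q ord_max|).
have d0 : 0 < d by rewrite lt_min rho0 subr_gt0.
have [k mk qk] := qq _ d0 m.
have tk : `|t - qs k ord_max| < eps / 2.
  have dq : d <= eps / 2 - `|t - q ord_max| by rewrite ge_min lexx orbT.
  have := ler_distD (q ord_max) t (qs k ord_max); rewrite [`|q ord_max - _|]distrC.
  by have := qk ord_max; lra.
have Fk := small k t t01 tk.
have FkF : `|F (x_of (qs k)) t - F (x_of q) t| < e / 2.
  by apply: Fc => j; apply: lt_le_trans (qk _) _; rewrite ge_min lexx.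
have := km k mk; have := ler_distD (F (x_of (qs k)) t) (F (x_of q) t) 0.
rewrite !subr0 distrC => tri ke; apply: le_lt_trans tri _.
by rewrite [e]splitr addrC ltrD // (lt_trans Fk ke).
Qed.

End SmallValues.

Unset Implicit Arguments.

Theorem lemma2p3 (R : realType) (N : nat) (F : ('I_N -> R) -> R -> R) :
  analytic_nbhd F -> nonconstant F ->
  forall eps : R, 0 < eps <= 1 -> Sigma_eps F eps !=set0 ->
  exists delta : R, 0 < delta <= 1 /\ inA F eps delta.
Proof.
move=> FA _ eps eps01 _; apply: contrapT => noA.
have eps0 : 0 < eps by case/andP: eps01.
have /choice[qs /all_and3[qs_eps qs01 qs_small]] := not_inA_small_values eps01 noA.
have [|q cq qq] := cube_seq_cluster (u := qs).
  by move=> k; apply: cube_of_x_of; [case: (qs_eps k) | exact: qs01].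
apply: (Sigma_eps_cluster_notin eps0 qs_eps qq).
apply: (analytic_nbhd_Sigma FA (cube_x_of cq) (cq ord_max) (_ : 0 < eps / 2)).
  by rewrite divr_gt0.
exact: small_values_cluster_eq0 FA cq qq qs_small.
Qed.
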